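(* For every $k\ge1$, $G_k\cong\mathrm{Syl}_2 A_{2^k}$, the Sylow $2$-subgroup of the alternating group $A_{2^k}$.
   Context: Let $C_2=\{e,\sigma\}$ with $\sigma=(1,2)$ acting on $X=\{1,2\}$. Define $B_1=C_2$ and $B_k=B_{k-1}\wr C_2$ for $k>1$, with elements written as wreath recursions $(g_1,g_2)\pi$, $g_1,g_2\in B_{k-1}$, $\pi\in C_2$, and multiplication $(g_1,g_2)\pi\cdot(h_1,h_2)\rho=(g_1h_{\pi(1)},g_2h_{\pi(2)})\pi\rho$; $B_k$ acts faithfully on the set $X^k$ of words of length $k$ (of size $2^k$). Define $G_1=\{e\}$ and, for $k>1$, $G_k=\{(g_1,g_2)\pi\in B_k : g_1g_2\in G_{k-1}\}$. *)

From HB Require Import structures.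
From mathcomp Require Import all_boot fingroup perm morphism pgroup sylow alt.
Set Implicit Arguments. Unset Strict Implicit. Unset Printing Implicit Defensive.

(* X = {1,2} is encoded as bool (letter 1 = false, letter 2 = true);
   words of length k are k.-tuple bool; sigma = (1,2) is negation.
   An element of B_k is represented by the permutation of X^k it induces
   (the action is faithful).  [decomp p g1 g2 pi] says p = (g1,g2)pi, i.e.
   p(x w) = pi(x) g_x(w), where pi = true means sigma.  MathComp composes
   permutations left-to-right ((p*q) t = q (p t)), which makes the product
   of permutations coincide with the wreath-recursion multiplication
   (g1,g2)pi (h1,h2)rho = (g1 h_{pi(1)}, g2 h_{pi(2)}) pi rho. *)
Definition decomp (k : nat) (p : {perm k.+1.-tuple bool})
  (g1 g2 : {perm k.-tuple bool}) (pi : bool) : bool :=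
  [forall t : k.+1.-tuple bool,
     p t == cons_tuple (thead t (+) pi)
                       ((if thead t then g2 else g1) (behead_tuple t))].

Fixpoint B (k : nat) : {set {perm k.-tuple bool}} :=
  match k return {set {perm k.-tuple bool}} with
  | 0 => [set 1%g]
  | k'.+1 => [set p | [exists g1 in B k', exists g2 in B k',
                        exists pi : bool, decomp p g1 g2 pi]]
  end.

(* G_1 = {e};  G_k = {(g1,g2)pi in B_k | g1 g2 in G_{k-1}} for k > 1.
   (G 0 is an unused dummy value.) *)
Fixpoint G (k : nat) : {set {perm k.-tuple bool}} :=
  match k return {set {perm k.-tuple bool}} with
  | 0 => [set 1%g]
  | k'.+1 =>
      if k' == 0 then [set 1%g]
      else [set p | [exists g1 in B k', exists g2 in B k',
                      exists pi : bool, decomp p g1 g2 pi && ((g1 * g2)%g \in G k')]]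
  end.

From mathcomp Require Import all_boot fingroup perm morphism pgroup sylow alt.
From mathcomp Require Import zify.
Set Implicit Arguments. Unset Strict Implicit. Unset Printing Implicit Defensive.

(* B_k has order 2^(2^k-1), the 2-part of (2^k)!, so it is a Sylow 2-subgroup of
   Sym(X^k), and its intersection with the normal subgroup Alt(X^k) is a Sylow
   2-subgroup of Alt(X^k).  For k >= 1 the sign of (g1,g2)pi acting on X^(k+1) is
   sign(g1) sign(g2): the swap of the first letter is a product of 2^k disjoint
   transpositions.  Hence (g1,g2)pi is even iff g1 g2 is, and by induction
   G_k = B_k :&: Alt(X^k); it remains to relabel X^k as {0, ..., 2^k - 1}. *)

Local Open Scope group_scope.

Lemma odd_perm_morph_tperm (T U : finType) (f : T -> U) (psi : {perm T} -> {perm U}) :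
    injective f -> {morph psi : s1 s2 / s1 * s2} -> psi 1 = 1 ->
    (forall a b, psi (tperm a b) = tperm (f a) (f b)) ->
  forall s, odd_perm (psi s) = odd_perm s.
Proof.
move=> injf psiM psi1 psiT s; have [ts -> dts] := prod_tpermP s.
rewrite (big_morph psi psiM psi1); under eq_bigr do rewrite psiT.
rewrite -(big_map (fun t => (f t.1, f t.2)) xpredT (fun t => tperm t.1 t.2)).
rewrite !odd_perm_prod ?size_map // all_map.
by apply: sub_all dts => t /=; rewrite (inj_eq injf).
Qed.

Lemma cons_tuple_eq n (x y : bool) (w v : n.-tuple bool) :
  [tuple of x :: w] = [tuple of y :: v] -> x = y /\ w = v.
Proof. by move=> /(congr1 val) [-> /val_inj ->]. Qed.

Lemma cons_tuple_inj n (x : bool) : injective (fun w : n.-tuple bool => [tuple of x :: w]).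
Proof. by move=> w v /cons_tuple_eq[]. Qed.

Lemma behead_cons_tuple n x (w : n.-tuple bool) : behead_tuple [tuple of x :: w] = w.
Proof. exact: val_inj. Qed.

Section Wreath.
Variable k : nat.
Implicit Types g h : {perm k.-tuple bool}.

Definition wr_fun g1 g2 (pi : bool) (t : k.+1.-tuple bool) : k.+1.-tuple bool :=
  [tuple of thead t (+) pi :: (if thead t then g2 else g1) (behead_tuple t)].

Lemma wr_fun_inj g1 g2 pi : injective (wr_fun g1 g2 pi).
Proof.
move=> t t'; case/tupleP: t => x w; case/tupleP: t' => y v.
rewrite /wr_fun !theadE !behead_cons_tuple => /cons_tuple_eq[/addIb exy].
by subst y => /perm_inj ->.
Qed.

Definition wr g1 g2 pi := perm (@wr_fun_inj g1 g2 pi).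

Lemma wrE g1 g2 pi x (w : k.-tuple bool) :
  wr g1 g2 pi [tuple of x :: w] = [tuple of x (+) pi :: (if x then g2 else g1) w].
Proof. by rewrite permE /wr_fun theadE behead_cons_tuple. Qed.

Lemma decompE p g1 g2 pi : decomp p g1 g2 pi = (p == wr g1 g2 pi).
Proof.
apply/forallP/eqP => [Hp | ->]; last by move=> t; rewrite permE.
by apply/permP => t; rewrite permE; apply/eqP/Hp.
Qed.

Lemma wrM g1 g2 pi h1 h2 rho :
  wr g1 g2 pi * wr h1 h2 rho =
  wr (g1 * (if pi then h2 else h1)) (g2 * (if pi then h1 else h2)) (pi (+) rho).
Proof.
apply/permP => t; case/tupleP: t => x w.
rewrite permM !wrE addbA; congr [tuple of _ :: _].
by case: x; case: pi; rewrite /= permM.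
Qed.

Lemma wr1 : wr 1 1 false = 1.
Proof.
apply/permP => t; case/tupleP: t => x w.
by rewrite wrE perm1 addbF; case: x; rewrite perm1.
Qed.

Lemma wr_inj g1 g2 pi h1 h2 rho :
  wr g1 g2 pi = wr h1 h2 rho -> [/\ g1 = h1, g2 = h2 & pi = rho].
Proof.
move=> E; have wrE_eq x w := cons_tuple_eq (etrans (esym (wrE g1 g2 pi x w))
  (etrans (congr1 (fun s : {perm _} => s [tuple of x :: w]) E) (wrE _ _ _ _ _))).
have [/addbI <- _] := wrE_eq false [tuple of nseq k false].
by split=> //; apply/permP => w; [case: (wrE_eq false w) | case: (wrE_eq true w)].
Qed.

Definition wr_at (x : bool) g := wr (if x then 1 else g) (if x then g else 1) false.

Lemma wr_split g1 g2 pi : wr g1 g2 pi = wr_at false g1 * wr_at true g2 * wr 1 1 pi.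
Proof. by rewrite /wr_at !wrM /= !mulg1 !mul1g; case: pi. Qed.

End Wreath.

Lemma odd_wr_at k x (g : {perm k.-tuple bool}) : odd_perm (wr_at x g) = odd_perm g.
Proof.
apply: (@odd_perm_morph_tperm _ _ _ _ (@cons_tuple_inj k x)) => [g1 g2||].
- by rewrite /wr_at wrM; case: x; rewrite mulg1.
- by rewrite /wr_at if_same wr1.
move=> a b; apply/permP => t; case/tupleP: t => y w; rewrite wrE addbF.
have [<-|nxy] := eqVneq x y.
  by case: x; rewrite (inj_tperm a b w (@cons_tuple_inj k _)).
rewrite tpermD; first by case: x y nxy => -[]; rewrite ?perm1.
all: by apply/eqP => /cons_tuple_eq[exy _]; rewrite exy eqxx in nxy.
Qed.

Section SwapFirstLetters.
Variable k : nat.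

Definition swap12_fun (t : k.+2.-tuple bool) : k.+2.-tuple bool :=
  [tuple of thead (behead_tuple t) :: [tuple of thead t :: behead_tuple (behead_tuple t)]].

Lemma swap12_funE x y (w : k.-tuple bool) :
  swap12_fun [tuple of x :: [tuple of y :: w]] = [tuple of y :: [tuple of x :: w]].
Proof. by rewrite /swap12_fun theadE !behead_cons_tuple theadE. Qed.

Lemma swap12_funK : involutive swap12_fun.
Proof. by move=> t; case/tupleP: t => x t; case/tupleP: t => y w; rewrite !swap12_funE. Qed.

Definition swap12 := perm (inv_inj swap12_funK).

Lemma swap12E x y (w : k.-tuple bool) :
  swap12 [tuple of x :: [tuple of y :: w]] = [tuple of y :: [tuple of x :: w]].
Proof. by rewrite permE swap12_funE. Qed.

Lemma wr_flip_swap12 :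
  let flip := wr (1 : {perm k.-tuple bool}) 1 true in
  wr 1 1 true * swap12 = swap12 * wr flip flip false.
Proof.
apply/permP => t; case/tupleP: t => x t; case/tupleP: t => y w.
by rewrite !permM wrE if_same perm1 !swap12E wrE addbF if_same wrE if_same perm1.
Qed.

End SwapFirstLetters.

(* Conjugating by [swap12] turns the swap of the first letter into the swap of the
   second letter, which is the same permutation in both halves, so it is even. *)
Lemma odd_wr_flip k : odd_perm (wr (1 : {perm k.+1.-tuple bool}) 1 true) = false.
Proof.
have := congr1 (@odd_perm _) (wr_flip_swap12 k).
rewrite !odd_permM addbC => /addbI ->.
by rewrite [wr _ _ false]wr_split !odd_permM !odd_wr_at addbb wr1 odd_perm1.
Qed.

Lemma odd_wr k (g1 g2 : {perm k.+1.-tuple bool}) pi :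
  odd_perm (wr g1 g2 pi) = odd_perm g1 (+) odd_perm g2.
Proof.
rewrite wr_split !odd_permM !odd_wr_at.
by case: pi; rewrite ?odd_wr_flip ?wr1 ?odd_perm1 addbF.
Qed.

Lemma B_wrP k p :
  reflect (exists g1 g2 pi, [/\ g1 \in B k, g2 \in B k & p = wr g1 g2 pi]) (p \in B k.+1).
Proof.
rewrite inE; apply: (iffP existsP) => [[g1 /andP[Bg1 /existsP[g2 /andP[Bg2]]]] | ].
  by case/existsP=> pi; rewrite decompE => /eqP->; exists g1, g2, pi.
case=> g1 [g2 [pi [Bg1 Bg2 ->]]]; exists g1; rewrite Bg1.
by apply/existsP; exists g2; rewrite Bg2; apply/existsP; exists pi; rewrite decompE.
Qed.

Lemma group_set_B k : group_set (B k).
Proof.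
elim: k => [|k IH]; first by rewrite group_set_one.
pose Bk := Group IH; apply/group_setP; split.
  by apply/B_wrP; exists 1, 1, false; rewrite wr1 !(group1 Bk).
move=> _ _ /B_wrP[g1 [g2 [pi [Bg1 Bg2 ->]]]] /B_wrP[h1 [h2 [rho [Bh1 Bh2 ->]]]].
apply/B_wrP; rewrite wrM; do 3!eexists; split; last reflexivity;
  by apply: (groupM (G := Bk)); case: pi.
Qed.

Canonical B_group k := Group (group_set_B k).

Lemma B_wr_image k :
  B k.+1 = [set wr x.1.1 x.1.2 x.2 | x in setX (setX (B k) (B k)) [set: bool]].
Proof.
apply/setP => p; apply/B_wrP/imsetP => [[g1 [g2 [pi [Bg1 Bg2 ->]]]] | ].
  by exists (g1, g2, pi); rewrite // !in_setX Bg1 Bg2 in_setT.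
case=> -[[g1 g2] pi]; rewrite !in_setX in_setT andbT => /andP[Bg1 Bg2] ->.
by exists g1, g2, pi.
Qed.

Lemma card_B k : #|B k| = (2 ^ (2 ^ k).-1)%N.
Proof.
elim: k => [|k IH]; first by rewrite cards1.
rewrite B_wr_image card_imset; last by move=> [[? ?] ?] [[? ?] ?] /= /wr_inj[-> -> ->].
rewrite !cardsX IH cardsT card_bool -!expnD -expnSr; congr (2 ^ _)%N.
by rewrite expnS; have := expn_gt0 2 k; lia.
Qed.

Lemma logn2_fact_double n : logn 2 (n.*2)`! = (n + logn 2 n`!)%N.
Proof.
elim: n => // n IH; rewrite doubleS !factS !lognM ?muln_gt0 ?fact_gt0 // IH.
rewrite (@logn_coprime 2 n.*2.+1); last by rewrite prime_coprime // dvdn2 /= odd_double.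
by rewrite -doubleS -mul2n lognM // logn_prime // eqxx; lia.
Qed.

Lemma logn2_fact_exp2 k : logn 2 (2 ^ k)`! = (2 ^ k).-1.
Proof.
elim: k => // k IH; rewrite expnS mul2n logn2_fact_double IH.
by have := expn_gt0 2 k; lia.
Qed.

Lemma B_Sylow k : 2.-Sylow('Sym_(k.-tuple bool)) (B k).
Proof.
by rewrite pHallE subsetT card_B card_Sym card_tuple card_bool p_part logn2_fact_exp2 eqxx.
Qed.

Lemma G_wrP k p :
  reflect (exists g1 g2 pi,
             [/\ g1 \in B k.+1, g2 \in B k.+1, g1 * g2 \in G k.+1 & p = wr g1 g2 pi])
          (p \in G k.+2).
Proof.
rewrite inE; apply: (iffP existsP) => [[g1 /andP[Bg1 /existsP[g2 /andP[Bg2]]]] | ].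
  by case/existsP=> pi; rewrite decompE => /andP[/eqP-> G12]; exists g1, g2, pi.
case=> g1 [g2 [pi [Bg1 Bg2 G12 ->]]]; exists g1; rewrite Bg1.
by apply/existsP; exists g2; rewrite Bg2; apply/existsP; exists pi; rewrite decompE eqxx.
Qed.

Lemma G_Alt k : G k.+1 = 'Alt_(k.+1.-tuple bool) :&: B k.+1.
Proof.
elim: k => [|k IH]; first by rewrite trivial_Alt_2 ?card_tuple ?card_bool // setI1g.
apply/setP => p; rewrite in_setI Alt_even.
apply/G_wrP/andP => [[g1 [g2 [pi [Bg1 Bg2 + ->]]]] | [ev /B_wrP[g1 [g2 [pi [Bg1 Bg2 Ep]]]]]].
  rewrite IH in_setI Alt_even odd_permM -(odd_wr g1 g2 pi) => /andP[ev _].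
  by split=> //; apply/B_wrP; exists g1, g2, pi.
exists g1, g2, pi; split=> //.
by rewrite IH in_setI Alt_even odd_permM -(odd_wr g1 g2 pi) -Ep ev groupM.
Qed.

Section PermTransport.
Variables (T U : finType) (f : T -> U) (f' : U -> T).
Hypotheses (fK : cancel f f') (f'K : cancel f' f).

Lemma perm_transport_inj (s : {perm T}) : injective (fun u => f (s (f' u))).
Proof. exact: inj_comp (can_inj fK) (inj_comp (@perm_inj _ s) (can_inj f'K)). Qed.

Definition perm_transport s := perm (@perm_transport_inj s).

Lemma perm_transportE s t : perm_transport s (f t) = f (s t).
Proof. by rewrite permE fK. Qed.

Lemma perm_transportM : {morph perm_transport : s1 s2 / s1 * s2}.
Proof. by move=> s1 s2; apply/permP => u; rewrite -[u]f'K permM !perm_transportE permM. Qed.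

Canonical perm_transport_morphism :=
  @Morphism _ _ 'Sym_T perm_transport (in2W perm_transportM).

Lemma injm_perm_transport : 'injm perm_transport_morphism.
Proof.
apply/injmP => s1 s2 _ _ /= E; apply/permP => t.
by apply: (can_inj fK); rewrite -!perm_transportE E.
Qed.

Lemma odd_perm_transport s : odd_perm (perm_transport s) = odd_perm s.
Proof.
apply: (odd_perm_morph_tperm (can_inj fK) perm_transportM) => [|a b].
  by apply/permP => u; rewrite -[u]f'K perm_transportE !perm1.
by apply/permP => u; rewrite -[u]f'K perm_transportE (inj_tperm _ _ _ (can_inj fK)).
Qed.

Lemma morphim_perm_transport_Alt : perm_transport_morphism @* 'Alt_T = 'Alt_U.
Proof.
apply/setP => u; apply/morphimP/idP => [[s _ sA ->] | uA].
  by rewrite Alt_even odd_perm_transport -Alt_even.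
have s_inj : injective (fun t => f' (u (f t))).
  exact: inj_comp (can_inj f'K) (inj_comp (@perm_inj _ u) (can_inj fK)).
have Eu : u = perm_transport (perm s_inj).
  by apply/permP => v; rewrite !permE /= !f'K.
exists (perm s_inj) => //.
by rewrite Alt_even -odd_perm_transport -Eu -Alt_even.
Qed.

End PermTransport.

Close Scope group_scope.

Section WordIndex.
Variable k : nat.

Lemma card_words : #|{: k.-tuple bool}| = (2 ^ k)%N.
Proof. by rewrite card_tuple card_bool. Qed.

Definition word_index (t : k.-tuple bool) : 'I_(2 ^ k) := cast_ord card_words (enum_rank t).

Definition index_word (i : 'I_(2 ^ k)) : k.-tuple bool :=
  enum_val (cast_ord (esym card_words) i).

Lemma word_indexK : cancel word_index index_word.
Proof. by move=> t; rewrite /word_index /index_word cast_ordK enum_rankK. Qed.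

Lemma index_wordK : cancel index_word word_index.
Proof. by move=> i; rewrite /word_index /index_word enum_valK cast_ordKV. Qed.

End WordIndex.

Theorem mainTheorem13 (k : nat) (hk : 1 <= k) :
  exists P : {group {perm 'I_(2 ^ k)}},
    P \in ('Syl_2('Alt_('I_(2 ^ k))))%g /\ (G k \isog P)%g.
Proof.
case: k hk => // k _.
have [eK e'K] := (@word_indexK k.+1, @index_wordK k.+1).
exists (perm_transport_morphism eK e'K @* ('Alt_(k.+1.-tuple bool) :&: B k.+1))%G.
split; last by rewrite G_Alt sub_isog ?subsetT ?injm_perm_transport.
rewrite inE -(morphim_perm_transport_Alt eK e'K) morphim_pSylow ?subsetT //.
exact: Sylow_setI_normal (Alt_normal _) (B_Sylow _).
Qed.
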